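(* (i) The symmetric bilinear form $(\cdot,\cdot)_i$ on $\bar{\mathcal V}_i$ is positive definite. (ii) The symmetric bilinear form $(\cdot,\cdot)_i$ on ${\mathcal V}_i$ is positive semidefinite.
   Context: Let ${\mathcal G}$ be a complex Lie algebra, ${\mathcal H}$ a subalgebra and $(\cdot,\cdot)$ a bilinear form on ${\mathcal G}$ such that: the form is symmetric, nondegenerate and invariant; ${\mathcal H}$ is a nontrivial finite dimensional abelian self-centralizing subalgebra with $\mathrm{ad}(h)$ diagonalizable for all $h\in{\mathcal H}$; for every root $\alpha$ with $(\alpha,\alpha)\neq 0$ and $x\in{\mathcal G}_\alpha$, $\mathrm{ad}(x)$ acts locally nilpotently on ${\mathcal G}$; the root system $R=\{\alpha\in{\mathcal H}^\star\mid {\mathcal G}_\alpha\neq 0\}$ is discrete in ${\mathcal H}^\star$; and $R^\times=\{\alpha\in R\mid(\alpha,\alpha)\neq0\}\neq\emptyset$ (i.e. ${\mathcal G}$ is a generalized reductive Lie algebra). Here the form is transferred to ${\mathcal H}^\star$ via $(\alpha,\beta):=(t_\alpha,t_\beta)$, where $t_\alpha\in{\mathcal H}$ represents $\alpha$ via the form. Let ${\mathcal V}$ be the real span of $R$. Partition $R^\times=\bigcup_i R^\times_i$ into the equivalence classes of the relation: $\alpha\sim\beta$ iff there is a chain $\alpha=\alpha_0,\alpha_1,\dots,\alpha_t=\beta$ in $R^\times$ with $(\alpha_j,\alpha_{j+1})\neq0$; so each $R^\times_i$ is indecomposable and $(R^\times_i,R^\times_j)=0$ for $i\neq j$. Let ${\mathcal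 V}_i$ be the real span of $R^\times_i$. Fix a nonzero scalar $c_i\in\mathbb C$ such that $(\cdot,\cdot)_i:=c_i(\cdot,\cdot)$ is real valued on ${\mathcal V}_i$ and $(\alpha,\alpha)_i>0$ for all $\alpha\in R^\times_i$. Let ${\mathcal V}^0=\{v\in{\mathcal V}\mid (v,{\mathcal V})=0\}$ be the radical of $(\cdot,\cdot)$ on ${\mathcal V}$, $\bar{\mathcal V}={\mathcal V}/{\mathcal V}^0$ with canonical map $v\mapsto\bar v$, equipped with the induced form $(\bar\alpha,\bar\beta):=(\alpha,\beta)$; let $\bar{\mathcal V}_i$ be the image of ${\mathcal V}_i$, with form $(\cdot,\cdot)_i=c_i(\cdot,\cdot)$. It has been shown that $\bar R_i=\{\bar\alpha\mid\alpha\in R^\times_i\}\cup\{0\}$ is finite. *)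

From mathcomp Require Import all_boot all_order all_algebra.
From mathcomp Require Import reals.
From mathcomp.real_closed Require Import complex.
From Stdlib Require Import ClassicalEpsilon.

Set Implicit Arguments.
Unset Strict Implicit.
Unset Printing Implicit Defensive.
Import GRing.Theory Num.Theory.
Local Open Scope ring_scope.

Section GenReductive.

Variable R : realType.
Local Notation C := (R[i]).
Variable G : lmodType C.
Variable br : G -> G -> G.
Variable B : G -> G -> C.
Variable H : vectType C.
Variable emb : {linear H -> G}.

Definition lie_bracket : Prop :=
  [/\ (forall (a : C) x y z, br (a *: x + y) z = a *: br x z + br y z),
      (forall (a : C) x y z, br z (a *: x + y) = a *: br z x + br z y),
      (forall x, br x x = 0) &
      (forall x y z, br x (br y z) + br y (br z x) + br z (br x y) = 0)].

Definition good_form : Prop :=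
  [/\ (forall (a : C) x y z, B (a *: x + y) z = a * B x z + B y z),
      (forall x y, B x y = B y x),
      (forall x, (forall y, B x y = 0) -> x = 0) &
      (forall x y z, B (br x y) z = B x (br y z))].

Definition good_cartan : Prop :=
  [/\ injective emb,
      (exists h : H, h != 0),
      (forall h k : H, br (emb h) (emb k) = 0) &
      (forall x : G, (forall h : H, br (emb h) x = 0) -> exists h : H, x = emb h)].

Definition ad_diagonalizable : Prop :=
  forall (h : H) (x : G), exists n (lam : 'I_n -> C) (v : 'I_n -> G),
    (forall k, br (emb h) (v k) = lam k *: v k) /\ x = \sum_(k < n) v k.

(* root spaces and roots; H^* is represented by functions H -> C *)
Definition root_space (al : H -> C) (x : G) : Prop :=
  forall h : H, br (emb h) x = al h *: x.

Definition is_root (al : H -> C) : Prop := exists x : G, x != 0 /\ root_space al x.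

Definition tvec (al : H -> C) : H :=
  epsilon (inhabits (0 : H)) (fun t : H => forall h : H, B (emb t) (emb h) = al h).

Definition hform (al be : H -> C) : C := B (emb (tvec al)) (emb (tvec be)).

Definition Rx (al : H -> C) : Prop := is_root al /\ hform al al != 0.

Definition loc_nilpotent : Prop :=
  forall al, Rx al -> forall x, root_space al x ->
    forall y : G, exists n : nat, iter n (br x) y = 0.

(* R is discrete in H^*: each root is isolated; the topology of the finite
   dimensional space H^* is described by the coordinates al(b_j) on a basis b of H *)
Definition roots_discrete : Prop :=
  forall al, is_root al -> exists e : C, 0 < e /\
    forall be, is_root be ->
      (forall j : 'I_(\dim (fullv : {vspace H})),
         `| be (tnth (vbasis fullv) j) - al (tnth (vbasis fullv) j) | < e) ->
      be = al.

Definition gen_reductive : Prop :=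
  [/\ lie_bracket, good_form, good_cartan, ad_diagonalizable &
      [/\ loc_nilpotent, roots_discrete & exists al, Rx al]].

Inductive rchain : (H -> C) -> (H -> C) -> Prop :=
  | rchain_refl al : Rx al -> rchain al al
  | rchain_step al be ga : Rx al -> hform al be != 0 -> rchain be ga -> rchain al ga.

Definition real_span (S : (H -> C) -> Prop) (v : H -> C) : Prop :=
  exists n (r : 'I_n -> C) (a : 'I_n -> H -> C),
    (forall k, r k \is Num.real /\ S (a k)) /\
    forall h : H, v h = \sum_(k < n) r k * a k h.

Definition Vsp : (H -> C) -> Prop := real_span is_root.

Definition Vrad (v : H -> C) : Prop := Vsp v /\ forall w, Vsp w -> hform v w = 0.

End GenReductive.

From HB Require Import structures.
From mathcomp Require Import all_boot all_order all_algebra.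
From mathcomp Require Import reals boolp.
From mathcomp Require Import ring zify.
From mathcomp.real_closed Require Import complex.
From Stdlib Require Import ClassicalEpsilon.

Set Implicit Arguments.
Unset Strict Implicit.
Unset Printing Implicit Defensive.
Import Order.TTheory GRing.Theory Num.Theory.
Local Open Scope ring_scope.

(* The reflections [s_a], [a] in [R_i^x], map [R_i^x] to itself (by sl2-strings)
   and, evaluated on [V], act only through the induced permutation of the finitely
   many classes of [R_i^x] modulo [V^0]; so the group [W] they generate acts
   through a finite set of maps. Averaging the squares of [x |-> c (w x, al0)]
   over that set gives a [W]-invariant positive semidefinite form [Q] on [V_i].
   Invariance under [s_a] forces [Q(x, a) = k_a c (x, a)] with
   [k_a = Q(a, a) / c (a, a)], and [k] is constant along chains of non-orthogonal
   roots, so [Q = k c ( , )] on [V_i] with [k > 0]: this is (ii). If [c (v, v) = 0]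
   then [Q(v, _) = 0], so [v] is orthogonal to [R_i^x], hence fixed by [W];
   averaging over [W], whose orbit sums of roots in [R_i^x] vanish, shows that [v]
   is orthogonal to every root, i.e. [v] lies in [V^0]: this is (i). *)

Lemma iter_last_neq (T : eqType) (f : T -> T) (z x : T) :
  x != z -> (exists m, iter m f x = z) -> exists p, iter p f x != z /\ iter p.+1 f x = z.
Proof.
move=> nx ex.
have ex' : exists m, iter m f x == z by case: ex => m hm; exists m; rewrite hm.
case: (ex_minnP ex') => -[|p] /eqP hp hmin; first by move: nx; rewrite -hp /= eqxx.
by exists p; split => //; apply/negP => /hmin; rewrite ltnn.
Qed.

Section GeneralizedReductive.
Variable R : realType.
Local Notation C := R[i].

Section ScalarFunction.
Variables (V : lmodType C) (al : V -> C).
Hypothesis al_scalar : scalar al.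

Definition scalar_pack : {scalar V} :=
  HB.pack al (GRing.isLinear.Build _ _ _ _ al al_scalar).

Lemma scalar_funN x : al (- x) = - al x. Proof. exact (raddfN scalar_pack x). Qed.
Lemma scalar_funZ a x : al (a *: x) = a * al x. Proof. exact (scalarZ scalar_pack a x). Qed.
Lemma scalar_fun_sum I (r : seq I) (P : pred I) (F : I -> V) :
  al (\sum_(i <- r | P i) F i) = \sum_(i <- r | P i) al (F i).
Proof. exact (raddf_sum scalar_pack r P F). Qed.

End ScalarFunction.

Section Bracket.
Variables (G : lmodType C) (br : G -> G -> G).
Hypothesis br_lie : lie_bracket br.

Definition br_linl z : {linear G -> G} := HB.pack (br^~ z)
  (GRing.isLinear.Build _ _ _ _ (br^~ z) (fun a x y => let: And4 L _ _ _ := br_lie in L a x y z)).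
Definition br_linr z : {linear G -> G} := HB.pack (br z)
  (GRing.isLinear.Build _ _ _ _ (br z) (fun a x y => let: And4 _ L _ _ := br_lie in L a x y z)).

Lemma br0l z : br 0 z = 0. Proof. exact (raddf0 (br_linl z)). Qed.
Lemma brDl x y z : br (x + y) z = br x z + br y z. Proof. exact (raddfD (br_linl z) x y). Qed.
Lemma brZl a x z : br (a *: x) z = a *: br x z. Proof. exact (linearZZ (br_linl z) a x). Qed.
Lemma br_suml I (r : seq I) (P : pred I) (F : I -> G) z :
  br (\sum_(i <- r | P i) F i) z = \sum_(i <- r | P i) br (F i) z.
Proof. exact (raddf_sum (br_linl z) r P F). Qed.

Lemma br0r z : br z 0 = 0. Proof. exact (raddf0 (br_linr z)). Qed.
Lemma brDr x y z : br z (x + y) = br z x + br z y. Proof. exact (raddfD (br_linr z) x y). Qed.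
Lemma brNr x z : br z (- x) = - br z x. Proof. exact (raddfN (br_linr z) x). Qed.
Lemma brBr x y z : br z (x - y) = br z x - br z y. Proof. exact (raddfB (br_linr z) x y). Qed.
Lemma brZr a x z : br z (a *: x) = a *: br z x. Proof. exact (linearZZ (br_linr z) a x). Qed.
Lemma br_sumr I (r : seq I) (P : pred I) (F : I -> G) z :
  br z (\sum_(i <- r | P i) F i) = \sum_(i <- r | P i) br z (F i).
Proof. exact (raddf_sum (br_linr z) r P F). Qed.

Lemma br_anti x y : br x y = - br y x.
Proof.
case: br_lie => _ _ brxx _; apply/eqP; rewrite -addr_eq0.
by have := brxx (x + y); rewrite brDl !brDr !brxx add0r addr0 => ->.
Qed.

Lemma br_jacobi x y z : br x (br y z) = br (br x y) z + br y (br x z).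
Proof.
case: br_lie => _ _ _ jacobi; have := jacobi x y z.
rewrite [br z (br x y)]br_anti [br z x]br_anti brNr => /eqP.
by rewrite -addrA -opprD subr_eq0 addrC => /eqP.
Qed.

Section Form.
Variable B : G -> G -> C.
Hypothesis B_good : good_form br B.

Definition form_linl z : {scalar G} := HB.pack (B^~ z)
  (GRing.isLinear.Build _ _ _ _ (B^~ z) (fun a x y => let: And4 L _ _ _ := B_good in L a x y z)).

Lemma BC x y : B x y = B y x. Proof. by case: B_good. Qed.
Lemma B0l z : B 0 z = 0. Proof. exact (raddf0 (form_linl z)). Qed.
Lemma BDl x y z : B (x + y) z = B x z + B y z. Proof. exact (raddfD (form_linl z) x y). Qed.
Lemma BNl x z : B (- x) z = - B x z. Proof. exact (raddfN (form_linl z) x). Qed.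
Lemma BZl a x z : B (a *: x) z = a * B x z. Proof. exact (scalarZ (form_linl z) a x). Qed.
Lemma B_suml I (r : seq I) (P : pred I) (F : I -> G) z :
  B (\sum_(i <- r | P i) F i) z = \sum_(i <- r | P i) B (F i) z.
Proof. exact (raddf_sum (form_linl z) r P F). Qed.
Lemma B0r z : B z 0 = 0. Proof. by rewrite BC B0l. Qed.
Lemma BZr a x z : B z (a *: x) = a * B z x. Proof. by rewrite BC BZl BC. Qed.
Lemma B_sumr I (r : seq I) (P : pred I) (F : I -> G) z :
  B z (\sum_(i <- r | P i) F i) = \sum_(i <- r | P i) B z (F i).
Proof. by rewrite BC B_suml; apply: eq_bigr => i _; rewrite BC. Qed.

Lemma B_invariant x y z : B (br x y) z = B x (br y z). Proof. by case: B_good. Qed.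
Lemma B_nondeg x : (forall y, B x y = 0) -> x = 0.
Proof. by case: B_good => _ _ nd _; apply: nd. Qed.

Section Cartan.
Variables (H : vectType C) (emb : {linear H -> G}).
Hypotheses (H_cartan : good_cartan br emb) (ad_diag : ad_diagonalizable br emb).
Local Notation hf := (hform B emb).
Local Notation tv := (tvec B emb).

Lemma emb_inj : injective emb. Proof. by case: H_cartan. Qed.
Lemma br_emb h k : br (emb h) (emb k) = 0. Proof. by case: H_cartan. Qed.
Lemma centralizer_H x : (forall h, br (emb h) x = 0) -> exists h, x = emb h.
Proof. by case: H_cartan => _ _ _; apply. Qed.

Lemma root_scalar al : is_root br emb al -> scalar al.
Proof.
case=> x [nx rx] a h k; apply/eqP.
have := rx (a *: h + k); rewrite linearP /= brDl brZl !rx scalerA -scalerDl => /eqP.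
by rewrite eq_sym -subr_eq0 -scalerBl scaler_eq0 (negPf nx) orbF subr_eq0.
Qed.

Definition ad_eigen h (lam : C) x := br (emb h) x = lam *: x.

Lemma ad_eigen_adH b h lam x : ad_eigen b lam x -> ad_eigen b lam (br (emb h) x).
Proof. by rewrite /ad_eigen br_jacobi br_emb br0l add0r => ->; rewrite brZr. Qed.

Section EigenProjection.
Variables (h : H) (mu : C).

Definition eigen_step (nu : C) x := (mu - nu)^-1 *: (br (emb h) x - nu *: x).
Definition eigen_proj (s : seq C) x := foldr eigen_step x s.

Lemma eigen_proj_sum s I (r : seq I) (F : I -> G) :
  eigen_proj s (\sum_(i <- r) F i) = \sum_(i <- r) eigen_proj s (F i).
Proof.
have projD x y : eigen_proj s (x + y) = eigen_proj s x + eigen_proj s y.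
  elim: s => //= nu s' ->.
  by rewrite /eigen_step -scalerDr brDr [nu *: (_ + _)]scalerDr opprD addrACA.
have proj0 t : eigen_proj t 0 = 0.
  by elim: t => //= nu t ->; rewrite /eigen_step br0r scaler0 subr0 scaler0.
by elim/big_rec2: _ => [|i a b _ <-]; rewrite ?proj0 ?projD.
Qed.

Lemma eigen_proj_ad_eigen s b lam x : ad_eigen b lam x -> ad_eigen b lam (eigen_proj s x).
Proof.
elim: s => //= nu s IH /IH e; rewrite /ad_eigen /eigen_step brZr brBr brZr e.
by rewrite (ad_eigen_adH h e) scalerA mulrC -scalerA -scalerBr scalerA mulrC -scalerA.
Qed.

Lemma eigen_proj_eigen s lam x : ad_eigen h lam x ->
  eigen_proj s x = (\prod_(nu <- s) ((mu - nu)^-1 * (lam - nu))) *: x.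
Proof.
move=> e; elim: s => /= [|nu s ->]; first by rewrite big_nil scale1r.
rewrite big_cons /eigen_step brZr e scalerA (scalerA nu) -scalerBl !scalerA.
by congr (_ *: _); ring.
Qed.

End EigenProjection.

(* By invariance [(z, [h, v]) = - ga(h) (z, v)], so [z] only pairs with the
   [- ga(h)]-eigencomponent of [y]. *)
Lemma opposite_eigen_partner ga z h y : root_space br emb ga z ->
  exists y', [/\ ad_eigen h (- ga h) y', B z y' = B z y &
                 forall b lam, ad_eigen b lam y -> ad_eigen b lam y'].
Proof.
move=> rz; have [n [lam [v [ev ->]]]] := ad_diag h y.
set mu := - ga h.
pose s := [seq lam k | k <- [seq k <- enum 'I_n | lam k != mu]].
have proj_v k : eigen_proj h mu s (v k) = (lam k == mu)%:R *: v k.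
  rewrite (eigen_proj_eigen _ _ (ev k)); case: eqP => [->|/eqP ne].
    rewrite big_seq big1 ?scale1r // => nu /mapP [k' + ->].
    by rewrite mem_filter => /andP [nk' _]; rewrite mulVf // subr_eq0 eq_sym.
  apply/eqP; rewrite scale0r scaler_eq0 prodf_seq_eq0; apply/orP; left.
  apply/hasP; exists (lam k); last by rewrite subrr mulr0 eqxx.
  by apply/mapP; exists k; rewrite // mem_filter ne mem_enum.
exists (eigen_proj h mu s (\sum_(k < n) v k)); split.
- rewrite /ad_eigen eigen_proj_sum br_sumr scaler_sumr; apply: eq_bigr => k _.
  by rewrite proj_v brZr (ev k); case: eqP => [->|_]; rewrite ?scale0r ?scaler0 ?scale1r.
- rewrite eigen_proj_sum !B_sumr; apply: eq_bigr => k _; rewrite proj_v.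
  case: eqP => [_|/eqP ne]; first by rewrite scale1r.
  have : lam k * B z (v k) = mu * B z (v k).
    by rewrite -BZr -(ev k) -B_invariant br_anti rz -scaleNr BZl.
  move/eqP; rewrite -subr_eq0 -mulrBl mulf_eq0 subr_eq0 (negPf ne) /= => /eqP ->.
  by rewrite scale0r B0r.
- by move=> b c e; apply: eigen_proj_ad_eigen.
Qed.

Local Notation bas := (vbasis (fullv : {vspace H})).
Local Notation dimH := (\dim (fullv : {vspace H})).

Lemma vbasis_expand (h : H) : h = \sum_(i < dimH) coord bas i h *: bas`_i.
Proof. exact: coord_vbasis (memvf h). Qed.

Lemma opposite_root_partner ga z : scalar ga -> root_space br emb ga z ->
  forall y, exists y', root_space br emb (fun h => - ga h) y' /\ B z y' = B z y.
Proof.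
move=> ga_lin rz y.
have [y' [e <-]] : exists y',
    (forall b, b \in (bas : seq H) -> ad_eigen b (- ga b) y') /\ B z y' = B z y.
  elim: (bas : seq H) => [|b l [y1 [e1 B1]]]; first by exists y.
  have [y2 [e2 B2 p2]] := opposite_eigen_partner b y1 rz.
  exists y2; split; last by rewrite B2.
  by move=> b'; rewrite inE => /orP [/eqP ->|/e1 /p2].
exists y'; split => // h; rewrite (vbasis_expand h) linear_sum br_suml scalar_fun_sum //.
rewrite -sumrN scaler_suml; apply: eq_bigr => i _.
by rewrite linearZ brZl e ?mem_nth ?size_tuple // scalar_funZ // scalerA mulrN.
Qed.

Lemma form_H_nondeg t : (forall h, B (emb t) (emb h) = 0) -> t = 0.
Proof.
move=> t_orth; apply: emb_inj; rewrite linear0; apply: B_nondeg => y.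
have zero_scalar : scalar (fun _ : H => 0 : C) by move=> a h k; rewrite mulr0 addr0.
have rt : root_space br emb (fun _ => 0) (emb t) by move=> h; rewrite br_emb scale0r.
have [y' [ry' <-]] := opposite_root_partner zero_scalar rt y.
have [h' ->] : exists h', y' = emb h'.
  by apply: centralizer_H => h; rewrite ry' oppr0 scale0r.
exact: t_orth.
Qed.

Lemma form_H_basis_ext (t : H) (al : H -> C) : scalar al ->
  (forall i : 'I_dimH, B (emb t) (emb bas`_i) = al bas`_i) ->
  forall h, B (emb t) (emb h) = al h.
Proof.
move=> al_lin E h; rewrite [in RHS](vbasis_expand h) scalar_fun_sum //.
rewrite [in LHS](vbasis_expand h) linear_sum B_sumr; apply: eq_bigr => i _.
by rewrite linearZ BZr scalar_funZ // E.
Qed.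

Lemma form_H_comb (u : 'I_dimH -> C) h :
  B (emb (\sum_i u i *: bas`_i)) (emb h) = \sum_i u i * B (emb bas`_i) (emb h).
Proof. by rewrite linear_sum B_suml; apply: eq_bigr => i _; rewrite linearZ BZl. Qed.

Definition gram : 'M[C]_dimH := \matrix_(i, j) B (emb bas`_i) (emb bas`_j).

Lemma gram_unit : gram \in unitmx.
Proof.
rewrite -row_free_unit -kermx_eq0; apply/rowV0P => v /sub_kermxP vM.
have comb0 : \sum_i v 0 i *: bas`_i = 0.
  apply: form_H_nondeg; apply: (form_H_basis_ext (al := fun _ => 0)).
    by move=> a h k; rewrite mulr0 addr0.
  move=> j; rewrite form_H_comb.
  move/matrixP/(_ 0 j): vM; rewrite !mxE => vMj; apply: etrans vMj.
  by apply: eq_bigr => i _; rewrite mxE.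
apply/rowP => i; rewrite mxE.
by have /andP [_ /freeP] := vbasisP (fullv : {vspace H}); apply.
Qed.

Lemma tvec_exists al : scalar al -> exists t, forall h, B (emb t) (emb h) = al h.
Proof.
move=> al_lin; pose u := \row_j al bas`_j *m invmx gram.
have uM : u *m gram = \row_j al bas`_j by rewrite mulmxKV // gram_unit.
exists (\sum_i u 0 i *: bas`_i); apply: form_H_basis_ext => // j.
rewrite form_H_comb; move/matrixP/(_ 0 j): uM; rewrite !mxE => uMj; apply: etrans uMj.
by apply: eq_bigr => i _; rewrite [gram _ _]mxE.
Qed.

Lemma tvecP al : scalar al -> forall h, B (emb (tv al)) (emb h) = al h.
Proof. by move/tvec_exists; apply: epsilon_spec. Qed.

Lemma hformC u v : hf u v = hf v u.
Proof. exact: BC. Qed.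

Lemma hformE u v : scalar v -> hf u v = v (tv u).
Proof. by move=> v_lin; rewrite hformC /hform tvecP. Qed.

Lemma root_space_iter ga mu E y : root_space br emb ga E -> root_space br emb mu y ->
  forall k h, br (emb h) (iter k (br E) y) = (mu h + k%:R * ga h) *: iter k (br E) y.
Proof.
move=> rE ry; elim=> [|k IH] h /=; first by rewrite ry mul0r addr0.
rewrite br_jacobi rE brZl IH brZr -scalerDl mulrSr; congr (_ *: _); ring.
Qed.

Lemma sl2_string ga E F t :
  root_space br emb ga E -> root_space br emb (fun h => - ga h) F ->
  br E F = emb t -> ga t = 2 ->
  (forall y, exists m, iter m (br E) y = 0) -> (forall y, exists m, iter m (br F) y = 0) ->
  forall be x, x != 0 -> root_space br emb be x ->
  exists p q : nat, be t = q%:R - 2 * p%:R /\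
    forall j, (j <= q)%N -> is_root br emb (fun h => be h + (p%:R - j%:R) * ga h).
Proof.
move=> rE rF EF gat nilE nilF be x nx rx.
have [p [ny Ey]] := iter_last_neq nx (nilE x).
set y := iter p (br E) x in ny Ey.
pose mu h := be h + p%:R * ga h.
have ry : root_space br emb mu y by move=> h; apply: root_space_iter.
have rFy j h : br (emb h) (iter j (br F) y) = (mu h - j%:R * ga h) *: iter j (br F) y.
  by rewrite (root_space_iter rF ry) mulrN.
have E_Fy j : br E (iter j.+1 (br F) y) = (j.+1%:R * (mu t - j%:R)) *: iter j (br F) y.
  elim: j => [|j IH].
    by rewrite /= br_jacobi EF -iterS Ey br0r addr0 ry mul1r subr0.
  rewrite [iter j.+2 _ _]iterS br_jacobi EF rFy IH brZr -scalerDl; congr (_ *: _).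
  by rewrite gat !mulrSr; ring.
have [q [nq Fq]] := iter_last_neq ny (nilF y).
have mu_q : mu t = q%:R.
  have := E_Fy q; rewrite Fq br0r => /esym/eqP; rewrite scaler_eq0 (negPf nq) orbF.
  by rewrite mulf_eq0 pnatr_eq0 /= subr_eq0 => /eqP.
exists p, q; split; first by move: mu_q; rewrite /mu gat => <-; ring.
move=> j jq; exists (iter j (br F) y); split.
  apply: contraNneq nq => Fj0.
  by rewrite -(subnK jq) iterD Fj0 iter_fix // br0r.
by move=> h; rewrite rFy /mu; congr (_ *: _); ring.
Qed.

Lemma form_nonorth e : e != 0 -> exists y, B e y != 0.
Proof.
move=> ne; case: (pselect (exists y, B e y != 0)) => // no_y.
case/eqP: ne; apply: B_nondeg => y; apply/eqP.
by apply: contraPT no_y => nz no; apply: no; exists y.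
Qed.

Lemma opposite_root_vector al e : scalar al -> root_space br emb al e -> e != 0 ->
  exists f, root_space br emb (fun h => - al h) f /\ B e f != 0.
Proof.
move=> al_lin re ne; have [y ny] := form_nonorth ne.
by have [f [rf Bf]] := opposite_root_partner al_lin re y; exists f; rewrite Bf.
Qed.

Lemma hformN al : scalar al -> hf (fun h => - al h) (fun h => - al h) = hf al al.
Proof.
move=> al_lin.
have alN_lin : scalar (fun h => - al h) by move=> a h k; rewrite al_lin opprD mulrN.
rewrite (hformE _ alN_lin) -(hformE _ al_lin) hformC (hformE _ alN_lin) opprK.
exact/esym/hformE.
Qed.

Lemma Rx_opp al : Rx br B emb al -> Rx br B emb (fun h => - al h).
Proof.
case=> -[e [ne re]] nal; have al_lin := root_scalar (ex_intro _ e (conj ne re)).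
have [f [rf nef]] := opposite_root_vector al_lin re ne.
split; last by rewrite hformN.
by exists f; split => //; apply: contraNneq nef => ->; rewrite B0r.
Qed.

Lemma sl2_triple al : Rx br B emb al -> exists E F t,
  [/\ root_space br emb al E, root_space br emb (fun h => - al h) F, br E F = emb t &
      forall be, scalar be -> be t = 2 * hf al be / hf al al].
Proof.
case=> -[e [ne re]] nal; have al_lin := root_scalar (ex_intro _ e (conj ne re)).
have [f [rf nd]] := opposite_root_vector al_lin re ne.
set d := B e f in nd.
have [t0 et0] : exists t0, br e f = emb t0.
  by apply: centralizer_H => h; rewrite br_jacobi re rf brZl brZr scaleNr subrr.
have Bt0 h : B (emb t0) (emb h) = d * al h.
  by rewrite -et0 B_invariant br_anti rf scaleNr opprK BZr mulrC.
have t0E : t0 = d *: tv al.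
  apply/eqP; rewrite -subr_eq0; apply/eqP; apply: form_H_nondeg => h.
  by rewrite raddfB /= BDl BNl Bt0 linearZ BZl tvecP // subrr.
pose t := (2 / hf al al) *: tv al.
exists e, ((2 / (hf al al * d)) *: f), t; split => //.
- by move=> h; rewrite brZr rf !scalerA mulrC.
- rewrite brZr et0 t0E !linearZ /= scalerA; congr (_ *: _).
  by field; rewrite nal nd.
- by move=> be be_lin; rewrite scalar_funZ // -hformE // mulrAC.
Qed.

Hypothesis ad_nil : loc_nilpotent br B emb.

Lemma root_reflect al be : Rx br B emb al -> is_root br emb be ->
  is_root br emb (fun h => be h - (2 * hf al be / hf al al) * al h).
Proof.
move=> Ral rbe; have [_ nal] := Ral; have be_lin := root_scalar rbe.
have al_lin := root_scalar Ral.1.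
have [E [F [t [rE rF EF t_eval]]]] := sl2_triple Ral.
set K := 2 * hf al be / hf al al; have be_t : be t = K := t_eval be be_lin.
have al_t : al t = 2 by rewrite t_eval // mulfK.
have nilE := ad_nil Ral rE; have nilF := ad_nil (Rx_opp Ral) rF.
case: rbe => x [nx rx].
have [p [q [be_pq roots]]] := sl2_string rE rF EF al_t nilE nilF nx rx.
(* [be - K al] has index [q - p] in the [al]-string through [be]; when [q < 2 p],
   the [- al]-string has [2 p' < q'] and the index [q' - p'] is used instead. *)
case: (leqP (p + p) q) => hpq.
  have := roots (q - p)%N (leq_subr _ _); congr is_root; apply: funext => h.
  by rewrite -be_t be_pq natrB; [ring | lia].
have rE' : root_space br emb (fun h => - - al h) E by move=> h; rewrite opprK.
have EF' : br F E = emb (- t) by rewrite br_anti EF raddfN.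
have al_t' : - al (- t) = 2 by rewrite scalar_funN // opprK.
have [p' [q' [be_pq' roots']]] := sl2_string rF rE' EF' al_t' nilF nilE nx rx.
have sum_pq : (q' + q = p' + p' + (p + p))%N.
  apply/eqP; rewrite -(eqr_nat C) !natrD -subr_eq0; apply/eqP.
  have := scalar_funN be_lin t; rewrite be_pq' be_pq => e.
  by rewrite -[q'%:R](subrK (2 * p'%:R)) e; ring.
have := roots' (q' - p')%N (leq_subr _ _); congr is_root; apply: funext => h.
have -> : K = 2 * p'%:R - q'%:R by rewrite -be_t -opprB -be_pq' -scalar_funN // opprK.
by rewrite natrB; [ring | lia].
Qed.

Lemma real_span_in (S : (H -> C) -> Prop) a : S a -> real_span S a.
Proof.
move=> Sa; exists 1%N, (fun _ => 1), (fun _ => a); split => [_|h]; first by rewrite rpred1.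
by rewrite big_ord1 mul1r.
Qed.

Lemma real_span_comb (S : (H -> C) -> Prop) u w r :
  real_span S u -> real_span S w -> r \is Num.real -> real_span S (fun h => u h + r * w h).
Proof.
move=> [n1 [r1 [a1 [S1 E1]]]] [n2 [r2 [a2 [S2 E2]]]] r_real.
exists (n1 + n2)%N, (fun i => match split i with inl j => r1 j | inr j => r * r2 j end),
  (fun i => match split i with inl j => a1 j | inr j => a2 j end); split.
  move=> i; case: (split i) => j; first exact: S1.
  by have [? ?] := S2 j; split => //; apply: rpredM.
move=> h; rewrite big_split_ord /= E1 E2 mulr_sumr; congr (_ + _); apply: eq_bigr => j _.
  by rewrite (unsplitK (inl j)).
by rewrite (unsplitK (inr j)) mulrA.
Qed.

Lemma sub_real_span (S S' : (H -> C) -> Prop) u :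
  (forall a, S a -> S' a) -> real_span S u -> real_span S' u.
Proof.
move=> SS' [m [r [a [Sa E]]]]; exists m, r, a; split => // k.
by have [? ?] := Sa k; split => //; apply: SS'.
Qed.

Lemma real_span_scalar (S : (H -> C) -> Prop) u :
  (forall a, S a -> scalar a) -> real_span S u -> scalar u.
Proof.
move=> S_lin [m [r [a [Sa E]]]] x h k.
rewrite !E mulr_sumr -big_split; apply: eq_bigr => i _ /=.
by have [_ /S_lin ->] := Sa i; ring.
Qed.

Local Notation Vs := (Vsp br emb).
Local Notation Vr := (Vrad br B emb).

Lemma Vsp_scalar u : Vs u -> scalar u.
Proof. by apply: real_span_scalar => a; apply: root_scalar. Qed.

Lemma Vrad_eval d z : Vr d -> Vs z -> d (tv z) = 0.
Proof. by move=> [Sd d_rad] Sz; rewrite -(hformE z (Vsp_scalar Sd)) hformC d_rad. Qed.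

Lemma hform_combl u w z r : scalar u -> scalar w -> scalar z ->
  hf (fun h => u h + r * w h) z = hf u z + r * hf w z.
Proof.
move=> u_lin w_lin z_lin.
have comb_lin : scalar (fun h => u h + r * w h) by move=> a h k; rewrite u_lin w_lin; ring.
by rewrite hformC (hformE _ comb_lin) (hformC u) (hformE _ u_lin) (hformC w) (hformE _ w_lin).
Qed.

Lemma Vrad_comb u w r : Vr u -> Vr w -> r \is Num.real -> Vr (fun h => u h + r * w h).
Proof.
move=> [Su u_rad] [Sw w_rad] r_real; split; first exact: real_span_comb.
move=> z Sz; rewrite (hform_combl _ (Vsp_scalar Su) (Vsp_scalar Sw) (Vsp_scalar Sz)).
by rewrite u_rad // w_rad // mulr0 addr0.
Qed.

Lemma Vrad_sum m (r : 'I_m -> C) (d : 'I_m -> H -> C) :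
  (forall k, r k \is Num.real) -> (forall k, Vr (d k)) -> Vr (fun h => \sum_k r k * d k h).
Proof.
elim: m r d => [|m IH] r d r_real Vd.
  have zero_lin : scalar (fun _ : H => 0 : C) by move=> a h k; rewrite mulr0 addr0.
  have -> : (fun h => \sum_(k < 0) r k * d k h) = (fun _ => 0).
    by apply: funext => h; rewrite big_ord0.
  split; first by exists 0%N, r, d; split => [[]|h]; last rewrite big_ord0.
  by move=> w Sw; rewrite hformC (hformE _ zero_lin).
have := Vrad_comb (IH (r \o lift ord_max) (d \o lift ord_max) (fun _ => r_real _) (fun _ => Vd _))
  (Vd ord_max) (r_real ord_max).
congr Vr; apply: funext => h; rewrite big_ord_recr /=; congr (_ + _).
apply: eq_bigr => k _.
by have -> : lift ord_max k = widen_ord (leqnSn m) k by apply: val_inj; exact: lift_max.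
Qed.

Definition rad_eqv (u w : H -> C) := Vr (fun h => u h - w h).

Lemma rad_eqv_sym u w : rad_eqv u w -> rad_eqv w u.
Proof.
move=> E; have real_m2 : (-2 : C) \is Num.real by rewrite rpredN rpred_nat.
have := Vrad_comb E E real_m2.
by congr Vr; apply: funext => h; ring.
Qed.

Lemma rad_eqv_trans u v w : rad_eqv u v -> rad_eqv v w -> rad_eqv u w.
Proof.
move=> E1 E2; have := Vrad_comb E1 E2 (rpred1 _).
by congr Vr; apply: funext => h; ring.
Qed.

Lemma rad_eqv_eval u w z : rad_eqv u w -> Vs z -> u (tv z) = w (tv z).
Proof. by move=> E Sz; apply/eqP; rewrite -subr_eq0; apply/eqP; exact: Vrad_eval E Sz. Qed.

Definition reflection (al u : H -> C) h := u h - (2 * u (tv al) / hf al al) * al h.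

Lemma reflection_comb al u w r :
  reflection al (fun h => u h + r * w h) = fun h => reflection al u h + r * reflection al w h.
Proof. by apply: funext => h; rewrite /reflection; ring. Qed.

Lemma reflection_sum al m (r : 'I_m -> C) (a : 'I_m -> H -> C) :
  reflection al (fun h => \sum_k r k * a k h) = fun h => \sum_k r k * reflection al (a k) h.
Proof.
apply: funext => h; rewrite /reflection mulr_sumr !mulr_suml -sumrB.
by apply: eq_bigr => k _; ring.
Qed.

Lemma reflection_opp al u : reflection al (fun h => - u h) = fun h => - reflection al u h.
Proof. by apply: funext => h; rewrite /reflection; ring. Qed.

Lemma reflection_scalar al u : scalar al -> scalar u -> scalar (reflection al u).
Proof. by move=> al_lin u_lin x h k; rewrite /reflection al_lin u_lin; ring. Qed.

Lemma reflection_fix al u : u (tv al) = 0 -> reflection al u = u.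
Proof. by move=> u0; apply: funext => h; rewrite /reflection u0 mulr0 !mul0r subr0. Qed.

Section NonIsotropic.
Variable al : H -> C.
Hypotheses (al_lin : scalar al) (nal : hf al al != 0).

Lemma reflection_self : reflection al al = fun h => - al h.
Proof. by apply: funext => h; rewrite /reflection -(hformE al al_lin); field. Qed.

Lemma reflectionK u : reflection al (reflection al u) = u.
Proof. by apply: funext => h; rewrite /reflection -(hformE al al_lin); field. Qed.

Lemma hform_reflection_self u : scalar u -> hf al (reflection al u) = - hf al u.
Proof.
move=> u_lin; rewrite (hformE al (reflection_scalar al_lin u_lin)) /reflection.
by rewrite -(hformE al u_lin) -(hformE al al_lin); field.
Qed.

Lemma hform_reflection u w : scalar u -> scalar w ->
  hf (reflection al u) (reflection al w) = hf u w.
Proof.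
move=> u_lin w_lin; have rw_lin := reflection_scalar al_lin w_lin.
have -> : reflection al u = fun h => u h + (- (2 * u (tv al) / hf al al)) * al h.
  by apply: funext => h; rewrite /reflection mulNr.
rewrite hform_combl // hform_reflection_self // (hformE u rw_lin) /reflection.
rewrite -(hformE u w_lin) -(hformE u al_lin) -(hformE al u_lin) -(hformE al w_lin).
by rewrite (hformC u al); field.
Qed.

End NonIsotropic.

Local Notation Rxx := (Rx br B emb).
Local Notation rch := (rchain br B emb).

Lemma rchain_Rxl al ga : rch al ga -> Rxx al. Proof. by case. Qed.
Lemma rchain_Rxr al ga : rch al ga -> Rxx ga. Proof. by elim. Qed.

Lemma rchain_rcons al be ga : rch al be -> Rxx ga -> hf be ga != 0 -> rch al ga.
Proof.
elim=> [a Ra|a b g Ra nab _ IH] Rg nbg; last by apply: rchain_step nab (IH Rg nbg).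
exact: rchain_step nbg (rchain_refl Rg).
Qed.

Section WeylAverage.
Variables (al0 : H -> C) (c : C).
Hypotheses (hal0 : Rxx al0) (hc : c != 0).
Local Notation Ri := (rch al0).
Local Notation Vi := (real_span Ri).
Hypothesis c_real : forall u v, Vi u -> Vi v -> c * hf u v \is Num.real.
Hypothesis c_pos : forall al, Ri al -> 0 < c * hf al al.
Variables (n : nat) (s : 'I_n -> H -> C) (k0 : 'I_n).
Hypothesis Ri_finite : forall al, Ri al -> exists k, rad_eqv al (s k).

Lemma Ri_al0 : Ri al0. Proof. exact: rchain_refl. Qed.
Lemma Ri_root a : Ri a -> is_root br emb a. Proof. by case/rchain_Rxr. Qed.
Lemma Ri_nondeg a : Ri a -> hf a a != 0. Proof. by case/rchain_Rxr. Qed.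
Lemma Ri_scalar a : Ri a -> scalar a. Proof. by move/Ri_root/root_scalar. Qed.
Lemma Ri_Vi a : Ri a -> Vi a. Proof. exact: real_span_in. Qed.
Lemma Vi_Vsp u : Vi u -> Vs u. Proof. by apply: sub_real_span => a /Ri_root. Qed.
Lemma Vi_scalar u : Vi u -> scalar u. Proof. by move/Vi_Vsp/Vsp_scalar. Qed.

Lemma reflection_Vi al u : Ri al -> Vi u -> Vi (reflection al u).
Proof.
move=> Ri_al Vu.
have -> : reflection al u = fun h => u h + (- (2 * ((c * hf al u) / (c * hf al al)))) * al h.
  apply: funext => h; rewrite /reflection -(hformE al (Vi_scalar Vu)).
  by field; rewrite hc Ri_nondeg.
apply: real_span_comb => //; first exact: Ri_Vi.
by rewrite rpredN rpredM ?rpred_nat // rpred_div // c_real //; apply: Ri_Vi.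
Qed.

Lemma reflection_Ri al be : Ri al -> Ri be -> Ri (reflection al be).
Proof.
move=> Ri_al Ri_be; have al_lin := Ri_scalar Ri_al; have be_lin := Ri_scalar Ri_be.
have Rx_refl : Rxx (reflection al be).
  split; last by rewrite hform_reflection ?Ri_nondeg.
  have := root_reflect (rchain_Rxr Ri_al) (Ri_root Ri_be).
  by congr is_root; apply: funext => h; rewrite /reflection (hformE al be_lin).
have [al_be0|al_be] := eqVneq (hf al be) 0.
  by rewrite reflection_fix // -(hformE al be_lin).
apply: (rchain_rcons Ri_al Rx_refl).
by rewrite (hform_reflection_self al_lin (Ri_nondeg Ri_al) be_lin) oppr_eq0.
Qed.

Fixpoint weyl_word (ws : seq (H -> C)) : Prop :=
  if ws is a :: ws' then Ri a /\ weyl_word ws' else True.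

Lemma weyl_word_rcons ws a : weyl_word ws -> Ri a -> weyl_word (rcons ws a).
Proof. by elim: ws => //= b ws IH [Rb Wb] Ra; split => //; apply: IH. Qed.

Definition weyl_act (ws : seq (H -> C)) u := foldr reflection u ws.

Lemma weyl_act_rcons ws a u : weyl_act (rcons ws a) u = weyl_act ws (reflection a u).
Proof. exact: foldr_rcons. Qed.

Lemma weyl_act_Vi ws u : weyl_word ws -> Vi u -> Vi (weyl_act ws u).
Proof. by elim: ws => //= a ws IH [Ra W] Vu; apply: reflection_Vi => //; apply: IH. Qed.

Lemma weyl_act_Ri ws u : weyl_word ws -> Ri u -> Ri (weyl_act ws u).
Proof. by elim: ws => //= a ws IH [Ra W] Ru; apply: reflection_Ri => //; apply: IH. Qed.

Lemma weyl_act_comb ws u r w :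
  weyl_act ws (fun h => u h + r * w h) = fun h => weyl_act ws u h + r * weyl_act ws w h.
Proof. by elim: ws => //= a ws ->; rewrite reflection_comb. Qed.

Lemma weyl_act_opp ws u : weyl_act ws (fun h => - u h) = fun h => - weyl_act ws u h.
Proof. by elim: ws => //= a ws ->; rewrite reflection_opp. Qed.

Lemma weyl_act_sum ws m (r : 'I_m -> C) (a : 'I_m -> H -> C) :
  weyl_act ws (fun h => \sum_k r k * a k h) = fun h => \sum_k r k * weyl_act ws (a k) h.
Proof. by elim: ws => //= b ws ->; rewrite reflection_sum. Qed.

Lemma weyl_act_fix ws v :
  weyl_word ws -> (forall a, Ri a -> v (tv a) = 0) -> weyl_act ws v = v.
Proof. by elim: ws => //= a ws IH [Ra W] v0; rewrite IH // reflection_fix // v0. Qed.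

Lemma weyl_act_eqv ws u w :
  weyl_word ws -> rad_eqv u w -> rad_eqv (weyl_act ws u) (weyl_act ws w).
Proof.
elim: ws => //= a ws IH [Ra W] /(IH W) E.
have aE : weyl_act ws u (tv a) = weyl_act ws w (tv a).
  exact: rad_eqv_eval E (real_span_in (Ri_root Ra)).
move: E; rewrite /rad_eqv; congr Vr; apply: funext => h.
by rewrite /reflection aE; ring.
Qed.

Definition class_of (u : H -> C) : 'I_n := epsilon (inhabits k0) (fun k => rad_eqv u (s k)).

Lemma class_ofP b : Ri b -> rad_eqv b (s (class_of b)).
Proof. by move/Ri_finite; apply: epsilon_spec. Qed.

Lemma class_of_eqv u w : rad_eqv u w -> class_of u = class_of w.
Proof.
move=> E; congr epsilon; apply: funext => k; apply: propext.
by split; [apply: rad_eqv_trans (rad_eqv_sym E) | apply: rad_eqv_trans E].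
Qed.

(* [class_rep k] is a root of the class [s k] when that class meets [Ri], and
   [al0] otherwise; either way it lies in [Ri]. *)
Definition class_rep k := epsilon (inhabits al0)
  (fun b => Ri b /\ ((exists b', Ri b' /\ rad_eqv b' (s k)) -> rad_eqv b (s k))).

Lemma class_repP k : Ri (class_rep k) /\
  ((exists b, Ri b /\ rad_eqv b (s k)) -> rad_eqv (class_rep k) (s k)).
Proof.
pose P b := Ri b /\ ((exists b', Ri b' /\ rad_eqv b' (s k)) -> rad_eqv b (s k)).
have [b Pb] : exists b, P b.
  case: (pselect (exists b, Ri b /\ rad_eqv b (s k))) => [[b [Rb Eb]]|no_b].
    by exists b; split => // _.
  by exists al0; split => [|/no_b]; first exact: Ri_al0.
exact: (epsilon_spec (inhabits al0) P (ex_intro _ b Pb)).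
Qed.

Definition class_action (ws : seq (H -> C)) : {ffun 'I_n -> 'I_n} :=
  [ffun k => class_of (weyl_act ws (class_rep k))].

Lemma class_action_eqv ws ws' b : weyl_word ws -> weyl_word ws' ->
  class_action ws = class_action ws' -> Ri b -> rad_eqv (weyl_act ws b) (weyl_act ws' b).
Proof.
move=> W W' act_eq Rb; set k := class_of b.
have [Rrep /(_ (ex_intro _ b (conj Rb (class_ofP Rb)))) Erep] := class_repP k.
have b_rep : rad_eqv b (class_rep k) := rad_eqv_trans (class_ofP Rb) (rad_eqv_sym Erep).
have act_class vs : weyl_word vs -> rad_eqv (weyl_act vs b) (s (class_action vs k)).
  move=> V; rewrite ffunE.
  exact: rad_eqv_trans (weyl_act_eqv V b_rep) (class_ofP (weyl_act_Ri V Rrep)).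
by apply: rad_eqv_trans (act_class _ W) _; rewrite act_eq; apply/rad_eqv_sym/act_class.
Qed.

Lemma class_action_eqv_Vi ws ws' x : weyl_word ws -> weyl_word ws' ->
  class_action ws = class_action ws' -> Vi x -> rad_eqv (weyl_act ws x) (weyl_act ws' x).
Proof.
move=> W W' act_eq [m [r [a [Sa xE]]]].
have -> : x = fun h => \sum_k r k * a k h by apply: funext.
rewrite !weyl_act_sum /rad_eqv.
have := Vrad_sum (fun k => (Sa k).1) (fun k => class_action_eqv W W' act_eq (Sa k).2).
by congr Vr; apply: funext => h; rewrite -sumrB; apply: eq_bigr => k _; ring.
Qed.

(* Evaluated on [Vsp], a word acts only through its action on the finitely many
   classes of [Ri] modulo [Vrad] (see [class_action_eqv]); [weyl_actions] is the
   finite set of these actions, and [word_of] picks a word for each. *)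
Definition weyl_actions : {set {ffun 'I_n -> 'I_n}} :=
  [set p | `[< exists ws, weyl_word ws /\ class_action ws = p >] ].

Definition word_of p :=
  epsilon (inhabits [::]) (fun ws => weyl_word ws /\ class_action ws = p).

Lemma word_ofP p : p \in weyl_actions -> weyl_word (word_of p) /\ class_action (word_of p) = p.
Proof. by rewrite inE => /asboolP ex; exact: epsilon_spec ex. Qed.

Lemma class_action_in ws : weyl_word ws -> class_action ws \in weyl_actions.
Proof. by move=> W; rewrite inE; apply/asboolP; exists ws. Qed.

Lemma weyl_actions_rcons_inj a : Ri a ->
  {in weyl_actions &, injective (fun p => class_action (rcons (word_of p) a))}.
Proof.
move=> Ra p1 p2 /word_ofP [W1 S1] /word_ofP [W2 S2] /= eq12.
rewrite -S1 -S2; apply/ffunP => k; rewrite !ffunE; apply: class_of_eqv.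
have [Rrep _] := class_repP k.
have := class_action_eqv (weyl_word_rcons W1 Ra) (weyl_word_rcons W2 Ra) eq12
  (reflection_Ri Ra Rrep).
by rewrite !weyl_act_rcons (reflectionK (Ri_scalar Ra) (Ri_nondeg Ra)).
Qed.

(* Appending the reflection [a] to the chosen words permutes [weyl_actions]. *)
Lemma weyl_sum_reflection a (Phi : seq (H -> C) -> C) : Ri a ->
  (forall ws ws', weyl_word ws -> weyl_word ws' -> class_action ws = class_action ws' ->
     Phi ws = Phi ws') ->
  \sum_(p in weyl_actions) Phi (rcons (word_of p) a) = \sum_(p in weyl_actions) Phi (word_of p).
Proof.
move=> Ra Phi_class; pose phi p := class_action (rcons (word_of p) a).
have phi_in p : p \in weyl_actions -> phi p \in weyl_actions.
  by case/word_ofP => W _; apply/class_action_in/weyl_word_rcons.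
have E p : p \in weyl_actions -> Phi (rcons (word_of p) a) = Phi (word_of (phi p)).
  move=> Fp; have [W _] := word_ofP Fp; have [W' S'] := word_ofP (phi_in p Fp).
  by apply: Phi_class => //; apply: weyl_word_rcons.
rewrite (eq_bigr _ E) -(big_imset (fun p => Phi (word_of p)) (weyl_actions_rcons_inj Ra)) /=.
suff -> : [set phi p | p in weyl_actions] = weyl_actions by [].
apply/eqP; rewrite eqEcard card_in_imset ?leqnn ?andbT; last exact: weyl_actions_rcons_inj.
by apply/subsetP => x /imsetP [p Fp ->]; apply: phi_in.
Qed.

Lemma weyl_orbit_sum b d : Ri b -> Vs d ->
  \sum_(p in weyl_actions) weyl_act (word_of p) b (tv d) = 0.
Proof.
move=> Rb Sd; set S := (X in X = 0).
have refl_b := reflection_self (Ri_scalar Rb) (Ri_nondeg Rb).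
have : \sum_(p in weyl_actions) weyl_act (rcons (word_of p) b) b (tv d) = S.
  apply: (weyl_sum_reflection (Phi := fun ws => weyl_act ws b (tv d)) Rb) => ws ws' W W' eq_ws.
  exact: rad_eqv_eval (class_action_eqv W W' eq_ws Rb) Sd.
under eq_bigr do rewrite weyl_act_rcons refl_b weyl_act_opp.
rewrite sumrN => NS; have : S *+ 2 = 0 by rewrite mulr2n -{1}NS addNr.
by move/eqP; rewrite mulrn_eq0 => /eqP.
Qed.

Lemma Ri_orth_Vrad v : Vi v -> (forall b, Ri b -> hf v b = 0) -> Vr v.
Proof.
move=> Vv v_orth; have v_lin := Vi_scalar Vv.
have v_fix ws : weyl_word ws -> weyl_act ws v = v.
  by move=> W; apply: weyl_act_fix => // b Rb; rewrite -(hformE b v_lin) hformC v_orth.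
(* [v] is fixed by the reflections, so [|W| v] is the sum of its [W]-images,
   while the [W]-orbit sums of the roots in [Ri] vanish. *)
have v_root d : is_root br emb d -> v (tv d) = 0.
  move=> rd; set S := \sum_(p in weyl_actions) weyl_act (word_of p) v (tv d).
  have S_const : S = v (tv d) *+ #|weyl_actions|.
    by rewrite -sumr_const; apply: eq_bigr => p /word_ofP [W _]; rewrite v_fix.
  have S0 : S = 0.
    have [m [r [a [Sa vE]]]] := Vv.
    rewrite /S (_ : v = fun h => \sum_k r k * a k h); last exact: funext.
    under eq_bigr do rewrite weyl_act_sum.
    rewrite exchange_big big1 // => k _; rewrite -mulr_sumr weyl_orbit_sum ?mulr0 //.
      exact: (Sa k).2.
    exact: real_span_in.
  move: S0; rewrite S_const => /eqP; rewrite mulrn_eq0 => /orP [|/eqP //].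
  rewrite cards_eq0 => /eqP no_act.
  by have := class_action_in (I : weyl_word [::]); rewrite no_act inE.
split; first exact: Vi_Vsp.
move=> w Sw; rewrite (hformE v (Vsp_scalar Sw)); have [m [r [a [Sa ->]]]] := Sw.
rewrite big1 // => k _; have [_ rk] := Sa k.
by rewrite -(hformE v (root_scalar rk)) hformC (hformE _ v_lin) v_root // mulr0.
Qed.

Definition weyl_coord ws u := c * weyl_act ws u (tv al0).

Definition avg_form x y :=
  \sum_(p in weyl_actions) weyl_coord (word_of p) x * weyl_coord (word_of p) y.

Definition avg_ratio a := avg_form a a / (c * hf a a).

Lemma weyl_coord_real ws u : weyl_word ws -> Vi u -> weyl_coord ws u \is Num.real.
Proof.
move=> W Vu; have Va := weyl_act_Vi W Vu.
rewrite /weyl_coord -(hformE al0 (Vi_scalar Va)) c_real //.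
exact/Ri_Vi/Ri_al0.
Qed.

Lemma weyl_coord_class ws ws' x : weyl_word ws -> weyl_word ws' ->
  class_action ws = class_action ws' -> Vi x -> weyl_coord ws x = weyl_coord ws' x.
Proof.
move=> W W' eq_ws Vx; congr (c * _); apply: rad_eqv_eval (class_action_eqv_Vi W W' eq_ws Vx) _.
exact: real_span_in (Ri_root Ri_al0).
Qed.

Lemma avg_formC x y : avg_form x y = avg_form y x.
Proof. by apply: eq_bigr => p _; rewrite mulrC. Qed.

Lemma avg_form_ge0 x : Vi x -> 0 <= avg_form x x.
Proof.
move=> Vx; apply: sumr_ge0 => p /word_ofP [W _].
by rewrite -expr2 -realEsqr weyl_coord_real.
Qed.

Lemma avg_form_reflection a x y : Ri a -> Vi x -> Vi y ->
  avg_form (reflection a x) (reflection a y) = avg_form x y.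
Proof.
move=> Ra Vx Vy; rewrite /avg_form.
rewrite -(weyl_sum_reflection (Phi := fun ws => weyl_coord ws x * weyl_coord ws y) Ra).
  by apply: eq_bigr => p _; rewrite /weyl_coord !weyl_act_rcons.
by move=> ws ws' W W' eq_ws; rewrite !(weyl_coord_class W W' eq_ws).
Qed.

(* Since [s_a a = - a] and [s_a x = x - k a], invariance under [s_a] gives
   [2 Q(x, a) = k Q(a, a)]. *)
Lemma avg_form_root a x : Ri a -> Vi x -> avg_form x a = (c * hf a x) * avg_ratio a.
Proof.
move=> Ra Vx; have a_lin := Ri_scalar Ra; have na := Ri_nondeg Ra.
set k := 2 * x (tv a) / hf a a.
have refl_x : reflection a x = fun h => x h + (- k) * a h.
  by apply: funext => h; rewrite /reflection mulNr.
have Q_inv : avg_form x a = - avg_form x a + k * avg_form a a.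
  rewrite -{1}(avg_form_reflection Ra Vx (Ri_Vi Ra)) refl_x (reflection_self a_lin na).
  rewrite /avg_form mulr_sumr -sumrN -big_split; apply: eq_bigr => p _ /=.
  by rewrite /weyl_coord weyl_act_comb weyl_act_opp; ring.
rewrite (hformE a (Vi_scalar Vx)) /avg_ratio; apply/eqP; rewrite -subr_eq0; apply/eqP.
transitivity ((avg_form x a - (- avg_form x a + k * avg_form a a)) / 2).
  by rewrite /k; field; rewrite hc na.
by rewrite -Q_inv subrr mul0r.
Qed.

Lemma avg_ratio_eq a b : Ri a -> Ri b -> hf a b != 0 -> avg_ratio a = avg_ratio b.
Proof.
move=> Ra Rb nab; apply: (mulfI (_ : c * hf a b != 0)); first by rewrite mulf_neq0.
by rewrite -(avg_form_root Ra (Ri_Vi Rb)) avg_formC (avg_form_root Rb (Ri_Vi Ra)) hformC.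
Qed.

Lemma avg_ratio_chain a g : rch a g -> Ri a -> avg_ratio a = avg_ratio g.
Proof.
elim=> [//|a' b g' _ nab rbg IH] Ra'.
have Rb : Ri b := rchain_rcons Ra' (rchain_Rxl rbg) nab.
by rewrite (avg_ratio_eq Ra' Rb nab) IH.
Qed.

Lemma avg_ratio_gt0 : 0 < avg_ratio al0.
Proof.
have e_in := class_action_in (I : weyl_word [::]).
have [W0 S0] := word_ofP e_in.
have coord0 : weyl_coord (word_of (class_action [::])) al0 = c * hf al0 al0.
  rewrite (weyl_coord_class W0 (I : weyl_word [::]) S0 (Ri_Vi Ri_al0)).
  by rewrite /weyl_coord (hformE al0 (Ri_scalar Ri_al0)).
apply: divr_gt0; last exact/c_pos/Ri_al0.
rewrite /avg_form (bigD1 _ e_in) /= coord0; apply: ltr_wpDr.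
  apply: sumr_ge0 => p /andP [/word_ofP [W _] _].
  by rewrite -expr2 -realEsqr weyl_coord_real //; apply/Ri_Vi/Ri_al0.
by apply: mulr_gt0; apply/c_pos/Ri_al0.
Qed.

Lemma avg_formE x v : Vi x -> Vi v -> avg_form x v = (c * hf x v) * avg_ratio al0.
Proof.
move=> Vx [m [r [a [Sa vE]]]]; have -> : v = fun h => \sum_k r k * a k h by apply: funext.
have Q_sum : avg_form x (fun h => \sum_k r k * a k h) = \sum_k r k * avg_form x (a k).
  transitivity (\sum_(p in weyl_actions) \sum_k
      r k * (weyl_coord (word_of p) x * weyl_coord (word_of p) (a k))).
    apply: eq_bigr => p _; rewrite /weyl_coord weyl_act_sum /= !mulr_sumr.
    by apply: eq_bigr => k _; ring.
  by rewrite exchange_big; apply: eq_bigr => k _; rewrite mulr_sumr.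
have hf_sum : hf x (fun h => \sum_k r k * a k h) = \sum_k r k * hf x (a k).
  have sum_lin : scalar (fun h => \sum_k r k * a k h).
    by apply: Vi_scalar; exists m, r, a.
  rewrite (hformE x sum_lin); apply: eq_bigr => k _.
  by rewrite (hformE x (Ri_scalar (Sa k).2)).
rewrite Q_sum hf_sum mulr_sumr mulr_suml; apply: eq_bigr => k _.
have Rk := (Sa k).2.
by rewrite avg_form_root // hformC (avg_ratio_chain Rk Ri_al0); ring.
Qed.

Lemma Vi_form_ge0 v : Vi v -> 0 <= c * hf v v.
Proof.
move=> Vv; have ratio_gt0 := avg_ratio_gt0.
have -> : c * hf v v = avg_form v v / avg_ratio al0.
  by rewrite avg_formE // mulfK // lt0r_neq0.
by rewrite divr_ge0 ?avg_form_ge0 // ltW.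
Qed.

Lemma Vi_form_gt0 v : Vi v -> ~ Vr v -> 0 < c * hf v v.
Proof.
move=> Vv v_nrad; rewrite lt_def Vi_form_ge0 // andbT; apply/eqP => v_iso.
apply: v_nrad; apply: Ri_orth_Vrad => // b Rb.
have Q_vv : avg_form v v = 0 by rewrite avg_formE // v_iso mul0r.
have sq_ge0 p : p \in weyl_actions -> 0 <= weyl_coord (word_of p) v * weyl_coord (word_of p) v.
  by case/word_ofP => W _; rewrite -expr2 -realEsqr weyl_coord_real.
have coord_v p : p \in weyl_actions -> weyl_coord (word_of p) v = 0.
  by move=> Fp; apply/eqP; rewrite -[_ == 0]orbb -mulf_eq0 (psumr_eq0P sq_ge0 Q_vv Fp).
have : avg_form v b = 0 by rewrite /avg_form big1 // => p Fp; rewrite coord_v // mul0r.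
rewrite (avg_formE Vv (Ri_Vi Rb)) => /eqP.
by rewrite mulf_eq0 (negPf (lt0r_neq0 avg_ratio_gt0)) orbF mulf_eq0 (negPf hc) => /eqP.
Qed.

End WeylAverage.
End Cartan.
End Form.
End Bracket.
End GeneralizedReductive.

Theorem lemma1p9 (R : realType) (G : lmodType R[i]) (br : G -> G -> G)
    (B : G -> G -> R[i]) (H : vectType R[i]) (emb : {linear H -> G})
    (hG : gen_reductive br B emb)
    (al0 : H -> R[i]) (hal0 : Rx br B emb al0)
    (c : R[i]) (hc : c != 0)
    (hreal : forall u v, real_span (rchain br B emb al0) u ->
               real_span (rchain br B emb al0) v -> c * hform B emb u v \is Num.real)
    (hpos : forall al, rchain br B emb al0 al -> 0 < c * hform B emb al al)
    (hfin : exists n (s : 'I_n -> H -> R[i]),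
              forall al, rchain br B emb al0 al ->
                exists k, Vrad br B emb (fun h => al h - s k h)) :
  (forall v, real_span (rchain br B emb al0) v -> ~ Vrad br B emb v ->
     0 < c * hform B emb v v) /\
  (forall v, real_span (rchain br B emb al0) v -> 0 <= c * hform B emb v v).
Proof.
have [br_lie B_good cartan ad_diag [ad_nil _ _]] := hG.
have [n [s s_cover]] := hfin.
have [k0 _] := s_cover al0 (rchain_refl hal0).
split => [v Vv v_nrad | v Vv].
- exact: (Vi_form_gt0 br_lie B_good cartan ad_diag ad_nil hal0 hc hreal hpos k0 s_cover Vv v_nrad).
- exact: (Vi_form_ge0 br_lie B_good cartan ad_diag ad_nil hal0 hc hreal hpos k0 s_cover Vv).
Qed.
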